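(* Let $N=[n]$, let $v:2^N\to\mathbb{R}_+$ be a monotone valuation with $v(\emptyset)=0$, and let $X$ be a decision map for $v$. Let $p\in\mathbb{R}^n_+$ and $S=X(p)$. If (1) for every $i\in S$ there exists $T\subseteq N$ with $i\notin T$ and $v(S)-p(S)=v(T)-p(T)$, and (2) for every $i\notin S$ and every $T\subseteq N$ with $i\in T$, $v(S)-p(S)\ge v(T)-p(T\setminus\{i\})$, then $p$ is a pure Nash equilibrium of the pricing game defined by $v$ and $X$. Moreover, if $X$ is maximal, then $p$ is a pure Nash equilibrium if and only if (1) and (2) hold.
   Context: Pricing game: $N=[n]$ is a set of services, service $i$ controlled by seller $i$. A buyer has valuation $v:2^N\to\mathbb{R}_+$, monotone ($v(S)\le v(T)$ for $S\subseteq T$) with $v(\emptyset)=0$. For $p\in\mathbb{R}^n_+$ and $S\subseteq N$, $p(S)=\sum_{j\in S}p_j$. The demand correspondence is $D(v;p)=\arg\max_{S\subseteq N}\,(v(S)-p(S))$. A decision map is a function $X:\mathbb{R}^n_+\to 2^N$ with $X(p)\in D(v;p)$ for all $p$; it is maximal if for every $p$ there is no $S'\in D(v;p)$ with $X(p)\subsetneq S'$. Each seller $i$ chooses a price $p_i\in\mathbb{R}_+$ and has utility $u_i(p)=p_i\cdot\mathbf{1}\{i\in X(p)\}$. A price vector $p$ is a pure Nash equilibrium if $u_i(p)\ge u_i(p_i',p_{-i})$ for every seller $i$ and every $p_i'\in\mathbb{R}_+$. *)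

From mathcomp Require Import all_boot all_order all_algebra.
From mathcomp Require Import reals.
Set Implicit Arguments. Unset Strict Implicit. Unset Printing Implicit Defensive.
Import Order.TTheory GRing.Theory Num.Theory.
Local Open Scope ring_scope.

Section Pricing.
Variables (R : realType) (n : nat).

Definition price := 'I_n -> R.

Definition nonneg_price (p : price) : Prop := forall j, 0 <= p j.

Definition psum (p : price) (S : {set 'I_n}) : R := \sum_(j in S) p j.

Definition valuation (v : {set 'I_n} -> R) : Prop :=
  [/\ forall S : {set 'I_n}, 0 <= v S,
      forall S T : {set 'I_n}, S \subset T -> v S <= v T
    & v set0 = 0].

Definition utility (v : {set 'I_n} -> R) (p : price) (S : {set 'I_n}) : R :=
  v S - psum p S.

Definition in_demand (v : {set 'I_n} -> R) (p : price) (S : {set 'I_n}) : Prop :=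
  forall T, utility v p T <= utility v p S.

Definition decision_map (v : {set 'I_n} -> R) (X : price -> {set 'I_n}) : Prop :=
  forall p, nonneg_price p -> in_demand v p (X p).

Definition maximal_decision_map (v : {set 'I_n} -> R) (X : price -> {set 'I_n}) : Prop :=
  decision_map v X /\
  forall p, nonneg_price p ->
    ~ exists S', in_demand v p S' /\ X p \proper S'.

Definition deviate (p : price) (i : 'I_n) (q : R) : price :=
  fun j => if j == i then q else p j.

Definition seller_utility (X : price -> {set 'I_n}) (p : price) (i : 'I_n) : R :=
  p i * (i \in X p)%:R.

Definition pure_NE (X : price -> {set 'I_n}) (p : price) : Prop :=
  forall i (q : R), 0 <= q ->
    seller_utility X (deviate p i q) i <= seller_utility X p i.

Definition cond1 (v : {set 'I_n} -> R) (p : price) (S : {set 'I_n}) : Prop :=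
  forall i, i \in S ->
    exists T : {set 'I_n}, i \notin T /\ utility v p S = utility v p T.

Definition cond2 (v : {set 'I_n} -> R) (p : price) (S : {set 'I_n}) : Prop :=
  forall i, i \notin S -> forall T : {set 'I_n}, i \in T ->
    v T - psum p (T :\ i) <= utility v p S.

End Pricing.

(* A seller's deviation from [p_i] to [q] shifts the utility of every bundle
   containing [i] by [p_i - q] and leaves all other bundles unchanged.
   Sufficiency: a seller in [S] who raises her price and still sells would make
   [X(p')] strictly worse than the tie [T] of (1); a seller outside [S] who now
   sells at [q > 0] would make [X(p')] beat [S] against (2).  Necessity: if (1)
   or (2) fails for [i], the slack [d > 0] lets [i] deviate by [d/2] and still
   be chosen, a profitable deviation. *)
From mathcomp Require Import all_boot all_order all_algebra.
From mathcomp Require Import reals.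
From mathcomp Require Import lra.
Set Implicit Arguments. Unset Strict Implicit. Unset Printing Implicit Defensive.
Import Order.TTheory GRing.Theory Num.Theory.
Local Open Scope ring_scope.

Section Deviation.
Variables (R : realType) (n : nat).
Implicit Types (p : price R n) (i : 'I_n) (q : R) (T : {set 'I_n}).

Lemma deviate_at p i q : deviate p i q i = q.
Proof. by rewrite /deviate eqxx. Qed.

Lemma nonneg_deviate p i q :
  nonneg_price p -> 0 <= q -> nonneg_price (deviate p i q).
Proof. by move=> hp hq j; rewrite /deviate; case: eqP. Qed.

Lemma psum_setD1 p i T : i \in T -> psum p T = p i + psum p (T :\ i).
Proof. by move=> hi; rewrite /psum (big_setD1 i hi). Qed.

Lemma psum_deviate_notin p i q T :
  i \notin T -> psum (deviate p i q) T = psum p T.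
Proof.
move=> hi; apply: eq_bigr => j hj; rewrite /deviate.
by case: eqP => // ji; move: hj; rewrite ji (negPf hi).
Qed.

Lemma psum_deviate_in p i q T :
  i \in T -> psum (deviate p i q) T = q + psum p (T :\ i).
Proof.
move=> hi; rewrite (psum_setD1 _ hi) deviate_at psum_deviate_notin //.
by rewrite in_setD1 eqxx.
Qed.

Variable v : {set 'I_n} -> R.

Lemma utility_deviate_notin p i q T :
  i \notin T -> utility v (deviate p i q) T = utility v p T.
Proof. by move=> hi; rewrite /utility psum_deviate_notin. Qed.

Lemma utility_deviate_in p i q T :
  i \in T -> utility v (deviate p i q) T = v T - psum p (T :\ i) - q.
Proof. by move=> hi; rewrite /utility psum_deviate_in //; lra. Qed.

Lemma seller_utility_deviate (X : price R n -> {set 'I_n}) p i q :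
  seller_utility X (deviate p i q) i = q * (i \in X (deviate p i q))%:R.
Proof. by rewrite /seller_utility deviate_at. Qed.

End Deviation.

Section PricingEquilibrium.
Variables (R : realType) (n : nat) (v : {set 'I_n} -> R).
Variable X : price R n -> {set 'I_n}.
Hypothesis decX : decision_map v X.
Variable p : price R n.
Hypothesis p_ge0 : nonneg_price p.

Let S := X p.
Let S_demand : in_demand v p S := decX p_ge0.

Lemma cond1_no_profitable_raise i q : cond1 v p S -> i \in S ->
  0 <= q -> i \in X (deviate p i q) -> q <= p i.
Proof.
move=> c1 iS q_ge0 iS'; set p' := deviate p i q.
have [T [iNT uT]] := c1 i iS.
have := decX (nonneg_deviate i p_ge0 q_ge0) T.
rewrite utility_deviate_notin // utility_deviate_in //.
have := S_demand (X p'); have := psum_setD1 p iS'.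
by rewrite uT /utility; lra.
Qed.

Lemma cond2_no_profitable_entry i q : cond2 v p S -> i \notin S ->
  0 <= q -> i \in X (deviate p i q) -> q <= 0.
Proof.
move=> c2 iNS q_ge0 iS'.
have := decX (nonneg_deviate i p_ge0 q_ge0) S.
rewrite utility_deviate_notin // utility_deviate_in //.
by have := c2 i iNS _ iS'; lra.
Qed.

Lemma pure_NE_of_conds : cond1 v p S -> cond2 v p S -> pure_NE X p.
Proof.
move=> c1 c2 i q q_ge0; rewrite seller_utility_deviate /seller_utility.
case: (boolP (i \in X (deviate p i q))) => iS'; last first.
  by rewrite mulr0; apply: mulr_ge0; [exact: p_ge0 | exact: ler0n].
rewrite mulr1; case: (boolP (i \in X p)) => iS.
  by rewrite mulr1; exact: (cond1_no_profitable_raise c1 iS q_ge0 iS').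
by rewrite mulr0; exact: (cond2_no_profitable_entry c2 iS q_ge0 iS').
Qed.

Lemma cond1_of_pure_NE : pure_NE X p -> cond1 v p S.
Proof.
move=> NE i iS.
have iN0 : i \notin (set0 : {set 'I_n}) by rewrite inE.
case: (@arg_maxP _ _ _ set0 (fun T : {set 'I_n} => i \notin T)
         (utility v p) iN0) => T0 iNT0 T0_max.
have [uT0|uT0] := eqVneq (utility v p T0) (utility v p S); first by exists T0.
have lt_T0 : utility v p T0 < utility v p S by rewrite lt_neqAle uT0 S_demand.
set d := utility v p S - utility v p T0.
have q_ge0 : 0 <= p i + d / 2 by have := p_ge0 i; rewrite /d; lra.
have := NE i _ q_ge0; rewrite seller_utility_deviate /seller_utility iS.
set p' := deviate p i (p i + d / 2).
case: (boolP (i \in X p')) => iS'.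
  rewrite !mulr1 => gain; exfalso; move: gain; rewrite /d; lra.
move=> _; exfalso.
have le_T0 : utility v p (X p') <= utility v p T0 := T0_max _ iS'.
have := decX (nonneg_deviate i p_ge0 q_ge0) S.
rewrite utility_deviate_in // utility_deviate_notin //.
have := psum_setD1 p iS; move: lt_T0 le_T0.
by rewrite /d /utility; lra.
Qed.

Lemma cond2_of_pure_NE : pure_NE X p -> cond2 v p S.
Proof.
move=> NE i iNS T iT; rewrite leNgt; apply/negP => lt_S.
set d := v T - psum p (T :\ i) - utility v p S.
have q_ge0 : 0 <= d / 2 by rewrite /d; lra.
have := NE i _ q_ge0; rewrite seller_utility_deviate /seller_utility (negPf iNS).
set p' := deviate p i (d / 2).
case: (boolP (i \in X p')) => iS'.
  rewrite mulr1 mulr0 => gain; move: gain lt_S; rewrite /d; lra.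
move=> _.
have := decX (nonneg_deviate i p_ge0 q_ge0) T.
rewrite utility_deviate_in // utility_deviate_notin //.
by have := S_demand (X p'); move: lt_S; rewrite /d; lra.
Qed.

End PricingEquilibrium.

Theorem mainTheorem1 (R : realType) (n : nat)
  (v : {set 'I_n} -> R) (X : price R n -> {set 'I_n}) (p : price R n) :
  valuation v -> decision_map v X -> nonneg_price p ->
  ((cond1 v p (X p) /\ cond2 v p (X p) -> pure_NE X p) /\
   (maximal_decision_map v X ->
      (pure_NE X p <-> cond1 v p (X p) /\ cond2 v p (X p)))).
Proof.
move=> _ decX p_ge0.
have sufficiency : cond1 v p (X p) /\ cond2 v p (X p) -> pure_NE X p.
  by case=> c1 c2; exact: (pure_NE_of_conds decX p_ge0 c1 c2).
split=> // _; split=> // NE.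
split; first exact: (cond1_of_pure_NE decX p_ge0 NE).
exact: (cond2_of_pure_NE decX p_ge0 NE).
Qed.
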